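(* Let $\Pi=\{\Pi_\phi\}$ be a partition of a finite set of paths $\mathcal{P}$ into pairwise disjoint cells, and let $\Phi$ be a finite well-behaved set of filling classes $\phi=(Z_\phi,\Pi_\phi)$, partially ordered by $\ge_\xi$. Let $Z_\Phi=\bigcup_{\phi\in\Phi}Z_\phi$, where each PGT $\gamma$ has duration $E_\gamma>0$, minimum separation $t^{\mathrm{minsep}}_\gamma\ge0$ and positive integer minimal allocation $\mathcal{M}_\gamma$. Let $\Omega$ be the set of all totally ordered subsets (chains) of $(\Phi,\ge_\xi)$. Then for every $t_0$ there exists a valid schedule containing exactly $\mathcal{M}_\gamma$ PGAs of every $\gamma\in Z_\Phi$, all of whose PGAs lie within $[t_0,\,t_0+\mathcal{R}(Z_\Phi)]$, where $$\mathcal{R}(Z_\Phi)=\max_{\Theta\in\Omega}\ \sum_{\theta\in\Theta}R(Z_\theta).$$ In particular $\mathcal{R}(Z_\Phi)$ upper-bounds the minimum time needed to execute such a valid schedule.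
   Context: Let $\mathcal{R}$ be the set of vertices on paths of $\mathcal{P}$; for $Q\subseteq\mathcal{P}$, $\xi(Q)=\{r\in\mathcal{R}:\exists\pi\in Q,\ r\in\pi\}$, and $\xi(\pi)$ denotes the vertex set of a single path. Order: $\phi>_\xi\psi$ iff $\xi(\Pi_\psi)\subsetneq\xi(\Pi_\phi)$. $\Phi=\{\phi_i\}$ is well-behaved if (1) $\xi(\Pi_{\phi_i})\ne\xi(\Pi_{\phi_j})$ for $i\ne j$, and (2) for $i\ne j$, $\xi(\Pi_{\phi_i})\cap\xi(\Pi_{\phi_j})\ne\emptyset$ implies one of $\xi(\Pi_{\phi_i}),\xi(\Pi_{\phi_j})$ is a proper subset of the other. Each $Z_\phi$ is a set of PGTs with $\pi_\gamma\in\Pi_\phi$. For $Z_\phi=\{\gamma_0,\dots,\gamma_{M-1}\}$ indexed with $\mathcal{M}_{\gamma_0}\le\dots\le\mathcal{M}_{\gamma_{M-1}}$, $E_x=E_{\gamma_x}$, $\tau_x=t^{\mathrm{minsep}}_{\gamma_x}$: $n_0=\mathcal{M}_{\gamma_0}-1$, $n_x=\mathcal{M}_{\gamma_x}-\mathcal{M}_{\gamma_{x-1}}$, $c_x=\max(\max_{y\ge x}(E_y+\tau_y),\sum_{y=x}^{M-1}E_y)$, $R(Z_\phi)=\sum_x(n_xc_x+E_x)$, $R(\emptyset)=0$. A PGA of $\gamma$ is an interval $[s,s+E_\gamma)$ assigned to $\gamma$; a schedule is a finite set of PGAs. A resource conflict: distinct PGAs $[s,e)$ of $\gamma$ and $[s',e')$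 of $\gamma'$ with $\xi(\pi_\gamma)\cap\xi(\pi_{\gamma'})\ne\emptyset$ and $s\le s'<e$. A minsep violation: time-consecutive PGAs $[s,e)$, $[s'',e'')$ of the same $\gamma$ with $s''-e<t^{\mathrm{minsep}}_\gamma$. A schedule is valid if it has neither. *)

From HB Require Import structures.
From mathcomp Require Import all_boot all_order all_algebra.
Set Implicit Arguments. Unset Strict Implicit. Unset Printing Implicit Defensive.
Import Order.TTheory GRing.Theory Num.Theory.
Local Open Scope ring_scope.

Section Defs.
Variables (V Pth Cls G : finType) (R : realFieldType).
Variable xi : Pth -> {set V}.
Variable PiC : Cls -> {set Pth}.
Variable Z : Cls -> {set G}.
Variable pathOf : G -> Pth.
Variables (E tau : G -> R).
Variable M : G -> nat.

Definition xiQ (Q : {set Pth}) : {set V} := \bigcup_(pi in Q) xi pi.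
Definition xiC (phi : Cls) : {set V} := xiQ (PiC phi).

Definition ge_xi (phi psi : Cls) : bool := (phi == psi) || (xiC psi \proper xiC phi).

Definition well_behaved (Phi : {set Cls}) : Prop :=
  (forall phi psi, phi \in Phi -> psi \in Phi -> phi != psi -> xiC phi != xiC psi) /\
  (forall phi psi, phi \in Phi -> psi \in Phi -> phi != psi ->
     xiC phi :&: xiC psi != set0 ->
     (xiC phi \proper xiC psi) || (xiC psi \proper xiC phi)).

Definition is_chain (Theta : {set Cls}) : bool :=
  [forall th1 in Theta, forall th2 in Theta, ge_xi th1 th2 || ge_xi th2 th1].

(* c_x computed on the suffix s = [gamma_x; ...; gamma_{M-1}] *)
Definition cval (s : seq G) : R :=
  Num.max (\big[Num.max/0]_(y <- s) (E y + tau y)) (\sum_(y <- s) E y).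

(* sum_{x} (n_x c_x + E_x), with prev = M_{gamma_{x-1}} (and prev = 1 at x = 0,
   so that n_0 = M_{gamma_0} - 1) *)
Fixpoint Rseq (prev : nat) (s : seq G) : R :=
  match s with
  | [::] => 0
  | g :: s' => ((M g - prev)%:R * cval s + E g) + Rseq (M g) s'
  end.

Definition Rcls (phi : Cls) : R :=
  Rseq 1 (sort (fun a b => (M a <= M b)%N) (enum (Z phi))).

Definition Rtot (Phi : {set Cls}) : R :=
  \big[Num.max/0]_(Theta : {set Cls} | (Theta \subset Phi) && is_chain Theta)
     \sum_(th in Theta) Rcls th.

Definition ZPhi (Phi : {set Cls}) : {set G} := \bigcup_(phi in Phi) Z phi.

(* A schedule: finite set of PGAs (gamma, s) meaning interval [s, s + E gamma). *)
Definition resource_conflict (S : seq (G * R)) : Prop :=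
  exists a b, [/\ a \in S, b \in S, a != b,
    xi (pathOf a.1) :&: xi (pathOf b.1) != set0 &
    a.2 <= b.2 < a.2 + E a.1].

Definition minsep_violation (S : seq (G * R)) : Prop :=
  exists a b, [/\ a \in S, b \in S, a.1 = b.1 & a.2 < b.2] /\
    (forall c, c \in S -> c.1 = a.1 -> ~ (a.2 < c.2 < b.2)) /\
    b.2 - (a.2 + E a.1) < tau a.1.

Definition valid_schedule (S : seq (G * R)) : Prop :=
  uniq S /\ ~ resource_conflict S /\ ~ minsep_violation S.

End Defs.

(* Each filling class is scheduled on its own by a round-robin over its PGTs
   sorted by minimal allocation: in phase x the PGTs gamma_x, gamma_{x+1}, ...
   run n_x rounds spaced c_x apart, then gamma_x runs once more and retires;
   all of this fits in R(Z_phi).  Classes sharing a vertex are comparable, so a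
   class may start once every class whose vertex set strictly contains its own
   has finished; these classes and the class itself form a chain, hence the
   whole schedule ends by t0 + R(Z_Phi). *)

From HB Require Import structures.
From mathcomp Require Import all_boot all_order all_algebra.
From mathcomp Require Import lra zify.
Import Order.TTheory GRing.Theory Num.Theory.
Set Implicit Arguments. Unset Strict Implicit. Unset Printing Implicit Defensive.
Local Open Scope ring_scope.

Lemma pairwise_either (T : eqType) (r : rel T) s :
  pairwise r s -> {in s &, forall a b, a != b -> r a b || r b a}.
Proof.
pose r' := [rel a b | [|| a == b, r a b | r b a]].
have r'_refl : reflexive r' by move=> a; rewrite /= eqxx.
have r'_sym : symmetric r' by move=> a b /=; rewrite eq_sym (orbC (r a b)).
move=> rs; have : pairwise r' s.
  by apply: sub_pairwise rs => a b /= ->; rewrite orbT.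
rewrite (pairwise_all2rel r'_refl r'_sym) => /allrelP r's a b ha hb /negbTE ab.
by have := r's a b ha hb; rewrite /= ab.
Qed.

Section RoundRobin.
Variables (G : finType) (R : realFieldType) (E tau : G -> R) (M : G -> nat).

Definition separated (a b : G * R) : bool :=
  (a.2 + E a.1 <= b.2) && ((a.1 == b.1) ==> (a.2 + E a.1 + tau a.1 <= b.2)).

Definition timing_ok (s : seq G) : Prop := {in s, forall y, 0 < E y /\ 0 <= tau y}.

Lemma timing_ok_cons y s : timing_ok (y :: s) -> timing_ok s.
Proof. by move=> ok z zs; apply: ok; rewrite inE zs orbT. Qed.

Fixpoint offset (s : seq G) (y : G) : R :=
  if s is z :: s' then (if z == y then 0 else E z + offset s' y) else 0.

Fixpoint round (T : R) (s : seq G) : seq (G * R) :=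
  if s is y :: s' then (y, T) :: round (T + E y) s' else [::].

(* Consecutive rounds are [cval s] apart: this covers both the length of a
   round and the minimum separation of every PGT of [s]. *)
Fixpoint rounds (n : nat) (T : R) (s : seq G) : seq (G * R) :=
  if n is n'.+1 then round T s ++ rounds n' (T + cval E tau s) s else [::].

(* Mirrors [Rseq]: with [s = gamma_x :: s'] and [prev = M gamma_(x-1)], run
   n_x rounds over [s], then gamma_x a last time. *)
Fixpoint class_schedule (prev : nat) (T : R) (s : seq G) : seq (G * R) :=
  if s is g :: s' then
    rounds (M g - prev) T s ++
    (g, T + (M g - prev)%:R * cval E tau s) ::
    class_schedule (M g) (T + (M g - prev)%:R * cval E tau s + E g) s'
  else [::].

Lemma sum_duration_ge0 s : timing_ok s -> 0 <= \sum_(z <- s) E z.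
Proof. by move=> ok; rewrite big_seq; apply: sumr_ge0 => z /ok [/ltW]. Qed.

Lemma offset_ge0 s y : timing_ok s -> 0 <= offset s y.
Proof.
elim: s => [|z s IH] ok //=; case: eqP => // _.
have [Ez _] := ok z (mem_head _ _); have := IH (timing_ok_cons ok); lra.
Qed.

Lemma offset_le_sum s y : timing_ok s -> y \in s ->
  offset s y + E y <= \sum_(z <- s) E z.
Proof.
elim: s => [|z s IH] ok //; rewrite inE big_cons /=.
have s_ge0 := sum_duration_ge0 (timing_ok_cons ok).
case: (eqVneq z y) => [<- _|_ /= ys]; first lra.
have := IH (timing_ok_cons ok) ys; lra.
Qed.

Lemma sum_duration_le_cval s : \sum_(z <- s) E z <= cval E tau s.
Proof. by rewrite /cval le_max lexx orbT. Qed.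

Lemma cval_ge_sep s y : y \in s -> E y + tau y <= cval E tau s.
Proof.
move=> ys; rewrite /cval le_max; apply/orP; left.
exact: (le_bigmax_seq 0 y xpredT (fun z => E z + tau z) ys erefl).
Qed.

Lemma cval_ge0 s : timing_ok s -> 0 <= cval E tau s.
Proof. by move=> ok; apply: le_trans (sum_duration_ge0 ok) (sum_duration_le_cval s). Qed.

Lemma mem_round s T b : uniq s -> b \in round T s ->
  b.1 \in s /\ b.2 = T + offset s b.1.
Proof.
elim: s T => [|y s IH] T //= /andP[ys us]; rewrite inE => /orP[/eqP ->|bs] /=.
  by rewrite eqxx mem_head addr0.
have [b1s ->] := IH _ us bs; split; first by rewrite inE b1s orbT.
by rewrite ifN ?addrA //; apply: contraNneq ys => ->.
Qed.

Lemma round_pairwise s T : timing_ok s -> uniq s -> pairwise separated (round T s).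
Proof.
elim: s T => [|y s IH] T ok //= /andP[ys us].
rewrite (IH _ (timing_ok_cons ok) us) andbT; apply/allP => b bs.
have [b1s b2] := mem_round us bs.
have y_b : (y == b.1) = false by apply: contraNF ys => /eqP ->.
have := offset_ge0 b.1 (timing_ok_cons ok).
by rewrite /separated /= y_b b2 andbT; lra.
Qed.

(* [a] is separated from every PGA of a round over [s] started at time [T] or later. *)
Definition ready (a : G * R) (T : R) (s : seq G) : bool :=
  (a.2 + E a.1 <= T) &&
  ((a.1 \in s) ==> (a.2 + E a.1 + tau a.1 <= T + offset s a.1)).

Lemma ready_le a T T' s : T <= T' -> ready a T s -> ready a T' s.
Proof.
rewrite /ready => TT' /andP[endT sepT]; apply/andP; split; first lra.
by apply/implyP => /(implyP sepT); lra.
Qed.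

Lemma ready_separated a T s b : timing_ok s -> ready a T s ->
  b.1 \in s -> T + offset s b.1 <= b.2 -> separated a b.
Proof.
rewrite /ready => ok /andP[endT sepT] b1s Tb; have off_ge0 := offset_ge0 b.1 ok.
rewrite /separated; apply/andP; split; first lra.
by apply/implyP => /eqP ab; move: sepT; rewrite ab b1s /=; lra.
Qed.

Lemma round_ready s T b : timing_ok s -> uniq s -> b \in round T s ->
  ready b (T + cval E tau s) s.
Proof.
move=> ok us bs; have [b1s b2] := mem_round us bs.
have := offset_le_sum ok b1s; have := sum_duration_le_cval s.
have := cval_ge_sep b1s; rewrite /ready b1s b2 /= => *; apply/andP; split; lra.
Qed.

Lemma mem_rounds n s T b : timing_ok s -> uniq s -> b \in rounds n T s ->
  b.1 \in s /\ T + offset s b.1 <= b.2.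
Proof.
move=> ok us; elim: n T => [|n IH] T //=; rewrite mem_cat => /orP[bs|bs].
  by have [-> ->] := mem_round us bs.
have [-> Tb] := IH _ bs; split => //; have := cval_ge0 ok; lra.
Qed.

Lemma rounds_ready n s T b : timing_ok s -> uniq s -> b \in rounds n T s ->
  ready b (T + n%:R * cval E tau s) s.
Proof.
move=> ok us; have c_ge0 := cval_ge0 ok.
elim: n T => [|n IH] T //=; rewrite mem_cat -natr1 => /orP[bs|bs].
  apply: ready_le (round_ready ok us bs).
  have : (0 : R) <= n%:R by rewrite ler0n.
  by move=> *; nra.
by apply: ready_le (IH _ bs); lra.
Qed.

Lemma rounds_pairwise n s T : timing_ok s -> uniq s ->
  pairwise separated (rounds n T s).
Proof.
move=> ok us; elim: n T => [|n IH] T //=.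
rewrite pairwise_cat IH round_pairwise // !andbT.
apply/allrelP => a b ars brs; have [b1s Tb] := mem_rounds ok us brs.
exact: ready_separated ok (round_ready ok us ars) b1s Tb.
Qed.

Lemma mem_class_schedule prev s T b : timing_ok s -> uniq s ->
  b \in class_schedule prev T s -> b.1 \in s /\ T + offset s b.1 <= b.2.
Proof.
elim: s prev T => [|g s IH] prev T //= ok /andP[gs us].
have c_ge0 := cval_ge0 ok; have : (0 : R) <= (M g - prev)%:R by rewrite ler0n.
rewrite mem_cat inE => n_ge0 /orP[bs|/orP[/eqP ->|bs]].
- by apply: (mem_rounds ok _ bs); rewrite /= gs us.
- by rewrite /= mem_head eqxx; split => //; nra.
have [b1s Tb] := IH _ _ (timing_ok_cons ok) us bs.
rewrite inE b1s orbT ifN; last by apply: contraNneq gs => ->.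
by split => //; nra.
Qed.

Lemma class_schedule_pairwise prev s T : timing_ok s -> uniq s ->
  pairwise separated (class_schedule prev T s).
Proof.
elim: s prev T => [|g s IH] prev T //= ok us; case/andP: (us) => gs us'.
have ok' := timing_ok_cons ok.
set T' := T + (M g - prev)%:R * cval E tau (g :: s).
have after_rounds b : b \in (g, T') :: class_schedule (M g) (T' + E g) s ->
    b.1 \in g :: s /\ T' + offset (g :: s) b.1 <= b.2.
  rewrite inE => /orP[/eqP -> /=|bs]; first by rewrite mem_head eqxx addr0.
  have [b1s Tb] := mem_class_schedule ok' us' bs.
  rewrite inE b1s orbT /= ifN; last by apply: contraNneq gs => ->.
  by split => //; lra.
rewrite pairwise_cat rounds_pairwise //= (IH _ _ ok' us') andbT.
apply/andP; split.
  apply/allrelP => a b ars bs; have [b1s T'b] := after_rounds b bs.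
  exact: ready_separated ok (rounds_ready ok us ars) b1s T'b.
apply/allP => b bs; have [b1s Tb] := mem_class_schedule ok' us' bs.
apply: (ready_separated ok' _ b1s Tb).
by rewrite /ready /= lexx (negbTE gs).
Qed.

Lemma Rseq_ge0 prev s : timing_ok s -> 0 <= Rseq E tau M prev s.
Proof.
elim: s prev => [|g s IH] prev ok //=.
have := IH (M g) (timing_ok_cons ok); have := cval_ge0 ok.
have [Eg _] := ok g (mem_head _ _); have : (0 : R) <= (M g - prev)%:R by rewrite ler0n.
by move=> *; nra.
Qed.

Lemma class_schedule_end prev s T b : timing_ok s -> uniq s ->
  b \in class_schedule prev T s -> b.2 + E b.1 <= T + Rseq E tau M prev s.
Proof.
elim: s prev T => [|g s IH] prev T //= ok us; case/andP: (us) => gs us'.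
have R_ge0 := Rseq_ge0 (M g) (timing_ok_cons ok); have [Eg _] := ok g (mem_head _ _).
rewrite mem_cat inE => /orP[bs|/orP[/eqP -> /=|bs]]; first 2 last.
- by have := IH _ _ (timing_ok_cons ok) us' bs; lra.
- by have /andP[endT _] := rounds_ready ok us bs; lra.
- lra.
Qed.

Lemma class_schedule_uniq prev s T : timing_ok s -> uniq s ->
  uniq (class_schedule prev T s).
Proof.
move=> ok us; rewrite uniq_pairwise.
apply: (sub_in_pairwise (P := [pred b | b.1 \in s])) (class_schedule_pairwise prev T ok us).
  move=> a b /= a1s _ /andP[ab _]; apply: contraTneq ab => <-.
  by have [Ea _] := ok _ a1s; rewrite -ltNge; lra.
by apply/allP => b /(mem_class_schedule ok us) [].
Qed.

Lemma count_round s T y : uniq s -> count (fun a => a.1 == y) (round T s) = (y \in s).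
Proof.
elim: s T => [|z s IH] T //= /andP[zs us]; rewrite IH // inE.
by case: (eqVneq z y) => [<-|]; rewrite ?(negbTE zs).
Qed.

Lemma count_rounds n s T y : uniq s ->
  count (fun a => a.1 == y) (rounds n T s) = (n * (y \in s))%N.
Proof.
by move=> us; elim: n T => [|n IH] T //=; rewrite count_cat count_round // IH mulSn.
Qed.

Lemma count_class_schedule prev s T y : uniq s ->
  sorted (fun a b => (M a <= M b)%N) s -> all (fun z => (prev <= M z)%N) s ->
  count (fun a => a.1 == y) (class_schedule prev T s) =
  if y \in s then (M y - prev).+1 else 0%N.
Proof.
elim: s prev T => [|g s IH] prev T //= us; case/andP: (us) => gs us' s_sorted.
case/andP => prev_g prev_s.
have M_trans : transitive (fun a b => (M a <= M b)%N) by move=> ? ? ?; apply: leq_trans.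
have g_s := order_path_min M_trans s_sorted.
rewrite count_cat count_rounds //= (IH _ _ us' (path_sorted s_sorted) g_s) inE.
case: (eqVneq y g) => [->|_] /=; first by rewrite (negbTE gs) muln1 addn0 addn1.
case: ifP => ys; rewrite ?muln0 //.
by have := allP g_s y ys; rewrite muln1 add0n; lia.
Qed.
End RoundRobin.

Lemma ler_sum_subset (I : finType) (R : numDomainType) (A B : {set I}) (F : I -> R) :
  A \subset B -> {in B, forall i, 0 <= F i} -> \sum_(i in A) F i <= \sum_(i in B) F i.
Proof.
move=> AB F_ge0; rewrite [X in _ <= X](big_setID A) /= (setIidPr AB) lerDl.
by apply: sumr_ge0 => i; rewrite inE => /andP[_ /F_ge0].
Qed.

Section Schedule.
Variables (V Pth Cls G : finType) (R : realFieldType).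
Variables (xi : Pth -> {set V}) (P : {set Pth}) (Pi : {set {set Pth}}).
Variables (Phi : {set Cls}) (PiC : Cls -> {set Pth}) (Z : Cls -> {set G}).
Variables (pathOf : G -> Pth) (E tau : G -> R) (M : G -> nat) (t0 : R).
Hypothesis hPi : partition Pi P.
Hypothesis hcell : forall phi, phi \in Phi -> PiC phi \in Pi.
Hypothesis hWB : well_behaved xi PiC Phi.
Hypothesis hpath : forall phi g, phi \in Phi -> g \in Z phi -> pathOf g \in PiC phi.
Hypothesis hE : forall g, g \in ZPhi Z Phi -> 0 < E g.
Hypothesis htau : forall g, g \in ZPhi Z Phi -> 0 <= tau g.
Hypothesis hM : forall g, g \in ZPhi Z Phi -> (0 < M g)%N.

Local Notation xC := (xiC xi PiC).
Local Notation RZ := (Rcls Z E tau M).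

Definition class_seq (phi : Cls) : seq G := sort (fun a b => (M a <= M b)%N) (enum (Z phi)).

(* A class without vertices conflicts with nothing and gets no ancestors;
   otherwise its ancestors all contain [xC phi], so they pairwise intersect
   and hence form a chain. *)
Definition ancestors (phi : Cls) : {set Cls} :=
  [set psi in Phi | (xC phi != set0) && (xC phi \proper xC psi)].

Definition start (phi : Cls) : R := t0 + \sum_(psi in ancestors phi) RZ psi.

Definition class_sched (phi : Cls) : seq (G * R) :=
  class_schedule E tau M 1 (start phi) (class_seq phi).

Definition schedule : seq (G * R) := flatten [seq class_sched phi | phi <- enum Phi].

Lemma mem_ZPhi phi g : phi \in Phi -> g \in Z phi -> g \in ZPhi Z Phi.
Proof. by move=> phiP gZ; apply/bigcupP; exists phi. Qed.

Lemma mem_class_seq phi g : (g \in class_seq phi) = (g \in Z phi).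
Proof. by rewrite mem_sort mem_enum. Qed.

Lemma class_seq_uniq phi : uniq (class_seq phi).
Proof. by rewrite sort_uniq enum_uniq. Qed.

Lemma class_seq_timing phi : phi \in Phi -> timing_ok E tau (class_seq phi).
Proof.
by move=> phiP g; rewrite mem_class_seq => /(mem_ZPhi phiP) gZ; split; [exact: hE|exact: htau].
Qed.

Lemma Rcls_ge0 phi : phi \in Phi -> 0 <= RZ phi.
Proof. by move=> phiP; apply: Rseq_ge0 (class_seq_timing phiP). Qed.

Lemma ancestors_sub phi : ancestors phi \subset Phi.
Proof. by apply/subsetP => psi; rewrite inE => /andP[]. Qed.

Lemma ancestors_irr phi : phi \notin ancestors phi.
Proof. by rewrite inE properxx !andbF. Qed.

Lemma ancestors_chain phi : phi \in Phi -> is_chain xi PiC (phi |: ancestors phi).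
Proof.
case: hWB => _ comparable phiP.
apply/forallP => t1; apply/implyP => t1A; apply/forallP => t2; apply/implyP => t2A.
rewrite /ge_xi; case: (eqVneq t1 t2) => [-> //|ne] /=.
move: t1A t2A ne; rewrite !in_setU1 => /orP[/eqP->|t1A] /orP[/eqP->|t2A].
- by rewrite eqxx.
- by move=> _; move: t2A; rewrite inE => /and3P[_ _ ->]; rewrite orbT.
- by move=> _; move: t1A; rewrite inE => /and3P[_ _ ->].
move=> ne; move: t1A t2A; rewrite !inE => /and3P[t1P /set0Pn[v v_phi] sub1] /and3P[t2P _ sub2].
rewrite orbC; apply: comparable => //; apply/set0Pn; exists v.
by rewrite inE (subsetP (proper_sub sub1)) ?(subsetP (proper_sub sub2)).
Qed.

Lemma start_ge phi : t0 <= start phi.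
Proof.
rewrite /start lerDl; apply: sumr_ge0 => psi psiA.
exact: Rcls_ge0 (subsetP (ancestors_sub phi) _ psiA).
Qed.

Lemma finish_eq phi : start phi + RZ phi = t0 + \sum_(psi in phi |: ancestors phi) RZ psi.
Proof. by rewrite big_setU1 ?ancestors_irr //= /start; lra. Qed.

Lemma finish_le_Rtot phi : phi \in Phi -> start phi + RZ phi <= t0 + Rtot xi PiC Z E tau M Phi.
Proof.
move=> phiP; rewrite finish_eq lerD2l.
apply: (le_bigmax_cond _ (fun Th : {set Cls} => \sum_(th in Th) RZ th)).
rewrite ancestors_chain // andbT; apply/subsetP => psi.
by rewrite in_setU1 => /orP[/eqP ->|/(subsetP (ancestors_sub phi))].
Qed.

Lemma finish_le_start p1 p2 : p1 \in Phi -> p2 \in Phi ->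
  xC p1 != set0 -> xC p1 \proper xC p2 -> start p2 + RZ p2 <= start p1.
Proof.
move=> p1P p2P p1_ne sub12; rewrite finish_eq lerD2l.
apply: ler_sum_subset; last by move=> psi /(subsetP (ancestors_sub p1)) /Rcls_ge0.
apply/subsetP => psi; rewrite in_setU1 => /orP[/eqP ->|]; first by rewrite inE p2P p1_ne sub12.
rewrite !inE => /and3P[psiP _ sub2]; rewrite psiP p1_ne.
exact: proper_trans sub12 sub2.
Qed.

Lemma class_unique p1 p2 g : p1 \in Phi -> p2 \in Phi -> g \in Z p1 -> g \in Z p2 -> p1 = p2.
Proof.
move=> p1P p2P g1 g2; case: (eqVneq (PiC p1) (PiC p2)) => [same|distinct].
  case: hWB => distinct_xi _; case: (eqVneq p1 p2) => // ne.
  by have := distinct_xi _ _ p1P p2P ne; rewrite /xiC same eqxx.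
case/and3P: hPi => _ disjoint_cells _.
have := trivIsetP disjoint_cells _ _ (hcell p1P) (hcell p2P) distinct.
by move/disjointFr => /(_ _ (hpath p1P g1)); rewrite (hpath p2P g2).
Qed.

Lemma class_windows_ordered p1 p2 : p1 \in Phi -> p2 \in Phi -> p1 != p2 ->
  xC p1 :&: xC p2 != set0 ->
  (start p1 + RZ p1 <= start p2) || (start p2 + RZ p2 <= start p1).
Proof.
case: hWB => _ comparable p1P p2P ne meet.
have [p1_ne p2_ne] : xC p1 != set0 /\ xC p2 != set0.
  by case/set0Pn: meet => v; rewrite inE => /andP[v1 v2]; split; apply/set0Pn; exists v.
case/orP: (comparable _ _ p1P p2P ne meet) => sub.
  by rewrite (finish_le_start p1P p2P p1_ne sub) orbT.
by rewrite (finish_le_start p2P p1P p2_ne sub).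
Qed.

Lemma class_sched_bounds phi a : phi \in Phi -> a \in class_sched phi ->
  [/\ a.1 \in Z phi, start phi <= a.2 & a.2 + E a.1 <= start phi + RZ phi].
Proof.
move=> phiP aS; have ok := class_seq_timing phiP.
have [a1s start_a] := mem_class_schedule ok (class_seq_uniq phi) aS.
have end_a := class_schedule_end ok (class_seq_uniq phi) aS.
have off_ge0 := offset_ge0 a.1 ok.
by split; [rewrite -mem_class_seq | lra | exact: end_a].
Qed.

Lemma mem_schedule a : a \in schedule -> exists2 phi, phi \in Phi & a \in class_sched phi.
Proof. by case/flattenP => _ /mapP[phi phiP ->] aS; exists phi; rewrite // -mem_enum. Qed.

Lemma count_schedule p phi0 : phi0 \in Phi ->
  (forall phi, phi \in Phi -> phi != phi0 -> count p (class_sched phi) = 0%N) ->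
  count p schedule = count p (class_sched phi0).
Proof.
move=> phi0P others; rewrite count_flatten sumnE !big_map big_enum /= (bigD1 phi0) //=.
by rewrite big1 ?addn0 // => phi /andP[]; apply: others.
Qed.

Lemma class_sched_pairwise phi : phi \in Phi -> pairwise (separated E tau) (class_sched phi).
Proof. by move=> phiP; apply: class_schedule_pairwise (class_seq_timing phiP) (class_seq_uniq phi). Qed.

Lemma xi_path_sub phi g : phi \in Phi -> g \in Z phi -> xi (pathOf g) \subset xC phi.
Proof. by move=> phiP gZ; apply: bigcup_sup; apply: hpath gZ. Qed.

Lemma schedule_uniq : uniq schedule.
Proof.
apply: count_mem_uniq => a; case: (boolP (a \in schedule)) => [aS|/count_memPn -> //].
have [phi phiP a_phi] := mem_schedule aS.
have [a1 _ _] := class_sched_bounds phiP a_phi.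
have phi_uniq := class_schedule_uniq M 1 (start phi) (class_seq_timing phiP) (class_seq_uniq phi).
rewrite (count_schedule phiP) ?count_uniq_mem ?a_phi // => psi psiP ne.
apply/count_memPn; apply: contra ne => a_psi.
have [a1' _ _] := class_sched_bounds psiP a_psi.
by rewrite (class_unique psiP phiP a1' a1).
Qed.

Lemma schedule_no_conflict : ~ resource_conflict xi pathOf E schedule.
Proof.
case=> a [b [aS bS ab meet /andP[ab_start ab_end]]].
have [pa paP a_pa] := mem_schedule aS; have [pb pbP b_pb] := mem_schedule bS.
have [a1 sa ea] := class_sched_bounds paP a_pa.
have [b1 sb eb] := class_sched_bounds pbP b_pb.
have Eb := hE (mem_ZPhi pbP b1).
case: (eqVneq pa pb) => [eq_ab|ne_ab].
  subst pb; have := pairwise_either (class_sched_pairwise paP) a_pa b_pb ab.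
  by case/orP => /andP[sep _]; lra.
have : xC pa :&: xC pb != set0.
  case/set0Pn: meet => v; rewrite inE => /andP[va vb]; apply/set0Pn; exists v.
  by rewrite inE (subsetP (xi_path_sub paP a1)) ?(subsetP (xi_path_sub pbP b1)).
by move/(class_windows_ordered paP pbP ne_ab)/orP => [] ?; lra.
Qed.

Lemma schedule_no_minsep_violation : ~ minsep_violation E tau schedule.
Proof.
case=> a [b [[aS bS same lt] [_ gap]]].
have [pa paP a_pa] := mem_schedule aS; have [pb pbP b_pb] := mem_schedule bS.
have [a1 _ _] := class_sched_bounds paP a_pa.
have [b1 _ _] := class_sched_bounds pbP b_pb.
have Ea := hE (mem_ZPhi paP a1).
rewrite -same in b1; have eq_ab := class_unique paP pbP a1 b1; subst pb.
have ab : a != b by apply: contraTneq lt => ->; rewrite ltxx.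
have := pairwise_either (class_sched_pairwise paP) a_pa b_pb ab.
rewrite /separated -same eqxx /=; clear same.
by case/orP => /andP[? ?]; lra.
Qed.

Lemma schedule_valid : valid_schedule xi pathOf E tau schedule.
Proof. by split; [exact: schedule_uniq | split; [exact: schedule_no_conflict | exact: schedule_no_minsep_violation]]. Qed.

Lemma schedule_in_ZPhi a : a \in schedule -> a.1 \in ZPhi Z Phi.
Proof.
by case/mem_schedule => phi phiP /(class_sched_bounds phiP) [a1 _ _]; apply: mem_ZPhi a1.
Qed.

Lemma count_schedule_ZPhi g : g \in ZPhi Z Phi -> count (fun a => a.1 == g) schedule = M g.
Proof.
move=> gZPhi; have /bigcupP[phi phiP gZ] := gZPhi.
have count_class psi : psi \in Phi ->
    count (fun a => a.1 == g) (class_sched psi) = if g \in Z psi then M g else 0%N.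
  move=> psiP; rewrite count_class_schedule ?class_seq_uniq ?mem_class_seq //.
  - by case: ifP => // _; have := hM gZPhi; lia.
  - by rewrite /class_seq; apply: sort_sorted => x y; apply: leq_total.
  by apply/allP => z; rewrite mem_class_seq => /(mem_ZPhi psiP) /hM.
rewrite (count_schedule phiP) ?count_class ?gZ // => psi psiP.
rewrite count_class //; case: ifP => // g_psi.
by rewrite (class_unique psiP phiP g_psi gZ) eqxx.
Qed.

Lemma schedule_window a : a \in schedule ->
  t0 <= a.2 /\ a.2 + E a.1 <= t0 + Rtot xi PiC Z E tau M Phi.
Proof.
case/mem_schedule => phi phiP /(class_sched_bounds phiP) [_ sa ea].
by have := start_ge phi; have := finish_le_Rtot phiP; split; lra.
Qed.
End Schedule.

Unset Implicit Arguments.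

Theorem mainTheorem6
  (V Pth Cls G : finType) (R : realFieldType)
  (xi : Pth -> {set V}) (P : {set Pth}) (Pi : {set {set Pth}})
  (Phi : {set Cls}) (PiC : Cls -> {set Pth}) (Z : Cls -> {set G})
  (pathOf : G -> Pth) (E tau : G -> R) (M : G -> nat)
  (hPi : partition Pi P)
  (hcell : forall phi, phi \in Phi -> PiC phi \in Pi)
  (hWB : well_behaved xi PiC Phi)
  (hpath : forall phi g, phi \in Phi -> g \in Z phi -> pathOf g \in PiC phi)
  (hE : forall g, g \in ZPhi Z Phi -> 0 < E g)
  (htau : forall g, g \in ZPhi Z Phi -> 0 <= tau g)
  (hM : forall g, g \in ZPhi Z Phi -> (0 < M g)%N)
  (t0 : R) :
  exists S : seq (G * R),
    [/\ valid_schedule xi pathOf E tau S,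
        (forall a, a \in S -> a.1 \in ZPhi Z Phi),
        (forall g, g \in ZPhi Z Phi -> count (fun a => a.1 == g) S = M g) &
        (forall a, a \in S ->
           t0 <= a.2 /\ a.2 + E a.1 <= t0 + Rtot xi PiC Z E tau M Phi)].
Proof.
exists (schedule xi Phi PiC Z E tau M t0); split.
- exact: schedule_valid M t0 hPi hcell hWB hpath hE htau.
- move=> a aS; exact: (schedule_in_ZPhi hE htau aS).
- move=> g gZ; exact: (count_schedule_ZPhi E tau t0 hPi hcell hWB hpath hM gZ).
- move=> a aS; exact: (schedule_window hWB hE htau aS).
Qed.
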